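(* Let $f:\mathbb{Z}_2^n\to\mathbb{Z}_2$ be a boolean function with EPC distance $d$. Then for all $\mu\in\mathbb{Z}_2^n$, $k\preceq\mu$ and $u\in V_{\bar\mu}$, with $P_{u,k,\mu}=\sum_{x\in k+V_{\bar\mu}}(-1)^{f(x)+u\cdot x}$, $$|P_{u,k,\mu}|^2\le 2^{n-w(\mu)}\left\{\sum_{i=d-w(\mu)}^{n-w(\mu)}\binom{n-w(\mu)}{i}+1\right\},$$ where $\binom{m}{i}=0$ for $i<0$.
   Context: For $x\in\mathbb{Z}_2^n$, $w(x)$ is the Hamming weight; $x\preceq y$ means $x_j\le y_j$ for all $j$; $\bar a$ is the complement of $a$; $V_a=\{x: x\preceq a\}$ and, for $k\preceq\mu$, $k+V_{\bar\mu}=\{k+x: x\preceq\bar\mu\}$; exponents of $(-1)$ are computed mod 2. EPC distance: for $k\preceq\mu$, $v(a,k,\mu)=\sum_{x\in k+V_{\bar\mu}}(-1)^{f(x)+f(x+a)}$. For $l\ge1,q\ge0$, $f$ satisfies EPC($l$) of order $q$ if $v(a,k,\mu)=0$ whenever $k\preceq\mu$, $1\le w(a)\le l$, $0\le w(\mu)\le q$. The EPC distance of $f$ is the largest integer $d\ge1$ such that $f$ satisfies EPC($l$) of order $q$ for all $l\ge1,q\ge0$ with $l+q<d$. *)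

(* Z_2^n is modelled as {ffun 'I_n -> bool}; Z_2 as bool,
   addition in Z_2 is xor (+). Signs (-1)^b are computed in int. *)
From mathcomp Require Import all_boot all_order all_algebra.
Set Implicit Arguments. Unset Strict Implicit. Unset Printing Implicit Defensive.
Import Order.TTheory GRing.Theory Num.Theory.

Definition vec (n : nat) := {ffun 'I_n -> bool}.

Definition wt n (x : vec n) : nat := #|[set i | x i]|.
Definition prec n (x y : vec n) : bool := [forall i, x i ==> y i].
Definition compl n (a : vec n) : vec n := [ffun i => ~~ a i].
Definition addv n (x y : vec n) : vec n := [ffun i => x i (+) y i].
Definition dotv n (u x : vec n) : bool := \big[xorb/false]_i (u i && x i).
Definition Vset n (a : vec n) : {set vec n} := [set x | prec x a].
Definition coset n (k mu : vec n) : {set vec n} :=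
  [set addv k x | x in Vset (compl mu)].

Definition sgn (b : bool) : int := ((-1) ^+ b)%R.

Definition vEPC n (f : vec n -> bool) (a k mu : vec n) : int :=
  (\sum_(x in coset k mu) sgn (f x (+) f (addv x a)))%R.

Definition EPC n (f : vec n -> bool) (l q : nat) : Prop :=
  forall a k mu : vec n, prec k mu -> 1 <= wt a <= l -> wt mu <= q ->
    vEPC f a k mu = 0%R.

Definition EPC_upto n (f : vec n -> bool) (d : nat) : Prop :=
  forall l q : nat, 1 <= l -> l + q < d -> EPC f l q.

Definition EPC_distance n (f : vec n -> bool) (d : nat) : Prop :=
  1 <= d /\ EPC_upto f d /\ (forall d', d < d' -> ~ EPC_upto f d').

Definition Pwalsh n (f : vec n -> bool) (u k mu : vec n) : int :=
  (\sum_(x in coset k mu) sgn (f x (+) dotv u x))%R.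

From Pilot Require Import Defs.
From mathcomp Require Import all_boot all_order all_algebra.
Import Order.TTheory GRing.Theory Num.Theory.
Set Implicit Arguments. Unset Strict Implicit. Unset Printing Implicit Defensive.

(* Expanding the square and substituting y = x + a gives
   P^2 = sum_{a in V_{bar mu}} (-1)^{u.a} v(a,k,mu).  Each v(a,k,mu) is a sum of
   2^{n - w(mu)} signs, and it vanishes when 1 <= w(a) < d - w(mu), because f
   satisfies EPC(w(a)) of order w(mu).  Hence |P|^2 is at most 2^{n - w(mu)}
   times the number of a in V_{bar mu} with w(a) = 0 or w(a) >= d - w(mu), and
   these are counted by binomial coefficients. *)

Lemma normr_sgn b : (`|sgn b| = 1)%R.
Proof. by case: b. Qed.

Lemma sgn_xor_pair b1 b2 c1 c2 :
  (sgn (b1 (+) c1) * sgn (b2 (+) (c1 (+) c2)) = sgn c2 * sgn (b1 (+) b2))%R.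
Proof. by case: b1; case: b2; case: c1; case: c2. Qed.

Lemma big_xorb_addb (I : Type) (r : seq I) (P : pred I) (F : I -> bool) :
  \big[xorb/false]_(i <- r | P i) F i = \big[addb/false]_(i <- r | P i) F i.
Proof. by elim/big_rec2: _ => // i b c _ ->; case: (F i); case: c. Qed.

Section Vectors.

Variable n : nat.
Implicit Types (x y a k mu u : vec n) (A : {set 'I_n}).

Lemma addKv x : cancel (Defs.addv x) (Defs.addv x).
Proof. by move=> y; apply/ffunP=> i; rewrite !ffunE addKb. Qed.

Lemma addv_inj x : injective (Defs.addv x).
Proof. exact: can_inj (addKv x). Qed.

Lemma addvA x y a : Defs.addv x (Defs.addv y a) = Defs.addv (Defs.addv x y) a.
Proof. by apply/ffunP=> i; rewrite !ffunE addbA. Qed.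

Lemma dotvDr u x y : dotv u (Defs.addv x y) = dotv u x (+) dotv u y.
Proof.
rewrite /dotv !big_xorb_addb -big_split /=; apply: eq_bigr => i _.
by rewrite ffunE; case: (u i); case: (x i); case: (y i).
Qed.

Lemma prec_complE a mu : prec a (compl mu) = [forall i, ~~ (a i && mu i)].
Proof. by apply: eq_forallb => i; rewrite ffunE; case: (a i); case: (mu i). Qed.

Lemma prec_compl_addv y a mu : prec y (compl mu) ->
  prec (Defs.addv y a) (compl mu) = prec a (compl mu).
Proof.
rewrite !prec_complE => /forallP y_mu; apply: eq_forallb => i; rewrite ffunE.
by move: (y_mu i); case: (y i); case: (a i); case: (mu i).
Qed.

Lemma mem_coset x k mu : (x \in coset k mu) = prec (Defs.addv k x) (compl mu).
Proof.
apply/imsetP/idP => [[y] | kx_mu].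
  by rewrite inE => y_mu ->; rewrite addKv.
by exists (Defs.addv k x); rewrite ?inE // addKv.
Qed.

Lemma card_coset k mu : #|coset k mu| = #|Vset (compl mu)|.
Proof. exact/card_imset/addv_inj. Qed.

Definition supp a : {set 'I_n} := [set i | a i].
Definition vec_of_set A : vec n := [ffun i => i \in A].

Lemma vec_of_setK : cancel vec_of_set supp.
Proof. by move=> A; apply/setP=> i; rewrite inE ffunE. Qed.

Lemma suppK : cancel supp vec_of_set.
Proof. by move=> a; apply/ffunP=> i; rewrite ffunE inE. Qed.

Lemma prec_compl_supp a mu : prec a (compl mu) = (supp a \subset ~: supp mu).
Proof.
rewrite prec_complE; apply/forallP/subsetP => [a_mu i | sub_a i].
  by rewrite !inE => ai; move: (a_mu i); rewrite ai.
by apply/negP => /andP[ai mui]; move: (sub_a i); rewrite !inE ai mui => /(_ isT).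
Qed.

Lemma card_compl_supp mu : #|~: supp mu| = n - wt mu.
Proof. by rewrite cardsCs setCK card_ord. Qed.

Lemma card_Vset_wt mu (P : pred nat) :
  #|[set a | prec a (compl mu) && P (wt a)]| =
  #|[set A : {set 'I_n} | (A \subset ~: supp mu) && P #|A|]|.
Proof.
rewrite -(card_imset _ (can_inj vec_of_setK)); apply: eq_card => a.
rewrite inE prec_compl_supp -[wt a]/#|supp a|; apply/idP/imsetP => [Pa | [A]].
  by exists (supp a); rewrite ?inE ?suppK.
by rewrite inE => PA ->; rewrite vec_of_setK.
Qed.

Lemma card_Vset mu : #|Vset (compl mu)| = 2 ^ (n - wt mu).
Proof.
have /eq_card -> : Vset (compl mu) =i [set a | prec a (compl mu) && predT (wt a)].
  by move=> a; rewrite !inE andbT.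
rewrite card_Vset_wt -card_compl_supp -card_powerset; apply: eq_card => A.
by rewrite !inE andbT.
Qed.

End Vectors.

Lemma card_subsets_with_card (T : finType) (S : {set T}) (P : pred nat) :
  #|[set A : {set T} | (A \subset S) && P #|A|]| =
  \sum_(i < #|S|.+1 | P i) 'C(#|S|, i).
Proof.
have card_ltS (A : {set T}) : A \subset S -> #|A| < #|S|.+1.
  by move=> sAS; rewrite ltnS subset_leq_card.
rewrite -sum1_card.
rewrite (partition_big (fun A : {set T} => inord #|A| : 'I_#|S|.+1) (fun i => P i));
  last first.
  by move=> A; rewrite inE => /andP[sAS PA]; rewrite inordK ?card_ltS.
apply: eq_bigr => i Pi.
transitivity #|[set A : {set T} | A \subset S & #|A| == i]|; last exact: cards_draws.
rewrite -(sum1_card (mem [set A : {set T} | A \subset S & #|A| == i])).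
apply: eq_bigl => A.
rewrite !inE; apply/andP/andP => [[/andP[sAS _] /eqP <-] | [sAS /eqP A_i]].
  by rewrite inordK ?card_ltS.
by rewrite sAS A_i Pi; split=> //; apply/eqP/val_inj; rewrite /= inordK ?card_ltS.
Qed.

Lemma sum_binomial_zero_or_ge (m d : nat) :
  \sum_(i < m.+1 | (i == 0 :> nat) || (d <= i)) 'C(m, i) <=
  \sum_(d <= i < m.+1) 'C(m, i) + 1.
Proof.
apply: (@leq_trans (\sum_(i < m.+1) ((if d <= i then 'C(m, i) else 0) +
                                    (if i == 0 :> nat then 'C(m, i) else 0)))).
  rewrite big_mkcond; apply: leq_sum => i _.
  by case: (i == 0 :> nat); case: (d <= i); rewrite /= ?leq_addr ?leq_addl.
rewrite big_split /= big_geq_mkord -big_mkcond /= leq_add2l.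
by rewrite big_ord_recl /= bin0 big1.
Qed.

Section WalshSpectrum.

Variables (n : nat) (f : vec n -> bool).
Implicit Types (a k mu u : vec n).

Lemma Pwalsh_sqr u k mu :
  (Pwalsh f u k mu ^+ 2 =
   \sum_(a in Vset (compl mu)) sgn (dotv u a) * vEPC f a k mu)%R.
Proof.
rewrite expr2 /Pwalsh mulr_suml.
transitivity (\sum_(x in coset k mu) \sum_(a in Vset (compl mu))
   sgn (dotv u a) * sgn (f x (+) f (Defs.addv x a)))%R.
  apply: eq_bigr => x x_coset; rewrite mulr_sumr (reindex_inj (@addv_inj _ x)) /=.
  apply: eq_big => [a | a _]; last by rewrite dotvDr sgn_xor_pair.
  by rewrite mem_coset inE addvA prec_compl_addv -?mem_coset.
by rewrite exchange_big; apply: eq_bigr => a _; rewrite /vEPC mulr_sumr.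
Qed.

Lemma normr_vEPC_le a k mu : (`|vEPC f a k mu| <= (2 ^ (n - wt mu))%:R)%R.
Proof.
apply: le_trans (ler_norm_sum _ _ _) _.
under eq_bigr do rewrite normr_sgn.
by rewrite sumr_const card_coset card_Vset.
Qed.

Lemma vEPC_eq0 d a k mu : EPC_upto f d -> prec k mu ->
  0 < wt a -> wt a < d - wt mu -> vEPC f a k mu = 0%R.
Proof.
move=> f_EPC k_mu a_gt0 a_lt; apply: (f_EPC (wt a) (wt mu)) => //.
  by rewrite addnC -ltn_subRL.
by rewrite a_gt0 leqnn.
Qed.

(* Unlike in the paper, u need not lie in V_{bar mu}. *)
Lemma Pwalsh_sqr_le d u k mu : EPC_upto f d -> prec k mu ->
  (`|Pwalsh f u k mu| ^+ 2 <=
   ((2 ^ (n - wt mu) *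
     #|[set a | prec a (compl mu) && ((wt a == 0) || (d - wt mu <= wt a))]|)%N)%:R)%R.
Proof.
move=> f_EPC k_mu; rewrite -normrX Pwalsh_sqr.
apply: le_trans (ler_norm_sum _ _ _) _.
apply: (@le_trans _ _ (\sum_(a in Vset (compl mu))
   ((if (wt a == 0) || (d - wt mu <= wt a) then 2 ^ (n - wt mu) else 0)%N)%:R)%R).
  apply: ler_sum => a _; rewrite normrM normr_sgn mul1r.
  case: ifP => [_ | /negbT]; first exact: normr_vEPC_le.
  rewrite negb_or -lt0n -ltnNge => /andP[a_gt0 a_lt].
  by rewrite (vEPC_eq0 f_EPC) ?normr0.
rewrite -natr_sum ler_nat -big_mkcondr sum_nat_const mulnC.
by apply/eq_leq; congr (_ * _); apply: eq_card => a; rewrite unfold_in !inE.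
Qed.

End WalshSpectrum.

Theorem mainTheorem4 (n : nat) (f : vec n -> bool) (d : nat) :
  EPC_distance f d ->
  forall (mu k u : vec n), prec k mu -> u \in Vset (compl mu) ->
    ((`|Pwalsh f u k mu| ^+ 2)%R <=
     ((2 ^ (n - wt mu) *
       (\sum_(d - wt mu <= i < (n - wt mu).+1) 'C(n - wt mu, i) + 1))%N)%:Z)%R.
Proof.
move=> [_ [f_EPC _]] mu k u k_mu _.
apply: le_trans (Pwalsh_sqr_le u f_EPC k_mu) _.
pose zero_or_ge i := (i == 0) || (d - wt mu <= i).
rewrite natz lez_nat leq_mul2l (card_Vset_wt mu zero_or_ge).
rewrite (card_subsets_with_card _ zero_or_ge).
by rewrite card_compl_supp sum_binomial_zero_or_ge orbT.
Qed.
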